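(* There is a deterministic algorithm which, given $n$ elements, makes $\binom{n}{2}$ comparisons and outputs a $1$-max-set of size at most $\lceil \log_2 n\rceil$.
   Context: Model of imprecise comparisons: there are $n$ elements, each with a fixed unknown real value; we identify an element with its value. Asked to compare $x_i$ and $x_j$, the comparator answers either ''$x_i \ge x_j$'' or ''$x_j \ge x_i$''. If $|x_i-x_j|>1$ the answer is correct; if $|x_i-x_j|\le 1$ the answer is arbitrary (possibly adversarial and adaptive). Let $x^*$ be the maximum value of an input element. A $k$-max-set is a subset of the input elements containing at least one element of value at least $x^*-k$. The guarantee must hold for every input and every comparator behaviour consistent with these rules. *)

From HB Require Import structures.
From mathcomp Require Import all_boot all_order all_algebra.
From mathcomp Require Import reals.
Set Implicit Arguments. Unset Strict Implicit. Unset Printing Implicit Defensive.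
Import Order.TTheory GRing.Theory Num.Theory.
Local Open Scope ring_scope.

(* A deterministic comparison algorithm on the elements 'I_n, as a decision
   tree.  [Cmp i j t1 t2] asks the comparator about x_i and x_j; it continues
   with [t1] if the answer is "x_i >= x_j" and with [t2] if the answer is
   "x_j >= x_i".  [Out S] stops and outputs the subset S. *)
Inductive ctree (n : nat) : Type :=
| Out : {set 'I_n} -> ctree n
| Cmp : 'I_n -> 'I_n -> ctree n -> ctree n -> ctree n.

(* [run x t k S]: on input values x, some comparator behaviour consistent with
   the imprecise-comparison model (if |x_i - x_j| > 1 the answer is correct,
   otherwise arbitrary, possibly adversarial and adaptive) leads the algorithm
   t to make exactly k comparisons and output S. *)
Inductive run (R : realType) (n : nat) (x : 'I_n -> R) :
  ctree n -> nat -> {set 'I_n} -> Prop :=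
| run_out (S : {set 'I_n}) : run x (Out S) 0 S
| run_ge (i j : 'I_n) (t1 t2 : ctree n) (k : nat) (S : {set 'I_n}) :
    x j <= x i + 1 -> run x t1 k S -> run x (Cmp i j t1 t2) k.+1 S
| run_le (i j : 'I_n) (t1 t2 : ctree n) (k : nat) (S : {set 'I_n}) :
    x i <= x j + 1 -> run x t2 k S -> run x (Cmp i j t1 t2) k.+1 S.

(* S is a k-max-set: it contains some s with x_s >= x^* - k, where x^* is the
   maximum value; written as: x_s >= x_i - k for every element i. *)
Definition kmaxset (R : realType) (n : nat) (x : 'I_n -> R) (k : R)
  (S : {set 'I_n}) : Prop :=
  exists2 s, s \in S & forall i : 'I_n, x i - k <= x s.

From HB Require Import structures.
From mathcomp Require Import all_boot all_order all_algebra.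
From mathcomp Require Import reals zify lra.
Import Order.TTheory GRing.Theory Num.Theory.

(* Compare every pair once and orient the pair towards the element declared
   larger; since a reversed answer is only possible within distance 1, an edge
   u -> v guarantees x_v <= x_u + 1.  In the resulting tournament, repeatedly
   pick a vertex with the most out-edges among the remaining ones and discard it
   together with everything it beats.  Averaging the out-degrees, that vertex
   beats at least half of the others, so fewer than half of the vertices
   survive each round and at most ceil(log2 n) vertices are picked.  Every
   vertex, in particular a maximum, is picked or beaten by a picked vertex, so
   the picked set is a 1-max-set. *)

Lemma sum_neq_card (T : finType) (A : {set T}) w :
  w \in A -> \sum_(v in A) (v != w) = (#|A|).-1.
Proof.
move=> wA; apply/esym; rewrite (cardsD1 w A) wA (bigD1 w wA) /= eqxx add0n.
rewrite -sum1dep_card big_mkcond [RHS]big_mkcond /=.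
by apply: eq_bigr => v _; rewrite !inE andbC; case: ifP => // /andP[_ ->].
Qed.

Section Tournament.
Local Set Implicit Arguments.
Local Unset Strict Implicit.
Variables (T : finType) (b : rel T) (d : T).

Definition beaten (A : {set T}) u := [set v in A | (v != u) && b u v].

(* The shift by one makes members of [A] outscore non-members, so the arg max
   lies in [A] whenever [A] is nonempty. *)
Definition score (A : {set T}) u := if u \in A then #|beaten A u|.+1 else 0.

Definition champion (A : {set T}) := [arg max_(u > d) score A u].

Definition survivors (A : {set T}) := A :\: (champion A |: beaten A (champion A)).

Fixpoint greedy fuel (A : {set T}) : {set T} :=
  if fuel is fuel'.+1 then
    if A == set0 then set0 else champion A |: greedy fuel' (survivors A)
  else set0.

Lemma champion_in (A : {set T}) : A != set0 -> champion A \in A.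
Proof.
case/set0Pn=> w wA; rewrite /champion; case: arg_maxnP => // u _ /(_ w isT).
by rewrite /score wA; case: (u \in A).
Qed.

Lemma champion_max (A : {set T}) w :
  w \in A -> #|beaten A w| <= #|beaten A (champion A)|.
Proof.
move=> wA; have /champion_in : A != set0 by apply/set0Pn; exists w.
by rewrite /champion; case: arg_maxnP => // u _ /(_ w isT) + uA; rewrite /score wA uA.
Qed.

Lemma survivors_proper (A : {set T}) : A != set0 -> survivors A \proper A.
Proof.
move=> /champion_in cA; apply/properP; split; first exact: subsetDl.
by exists (champion A) => //; rewrite !inE eqxx.
Qed.

Lemma greedy_dominates fuel (A : {set T}) v : #|A| <= fuel -> v \in A ->
  exists2 s, s \in greedy fuel A & (s == v) || b s v.
Proof.
elim: fuel A => [|fuel IH] A; first by rewrite leqn0 cards_eq0 => /eqP->; rewrite inE.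
move=> A_fuel vA; have A0 : A != set0 by apply/set0Pn; exists v.
rewrite /= (negbTE A0); set u := champion A.
have [-> | ] := eqVneq u v; first by exists v; rewrite ?setU11 ?eqxx.
have [buv _ | ] := boolP (b u v); first by exists u; rewrite ?setU11 ?buv ?orbT.
move=> Nbuv Nuv; have vS : v \in survivors A.
  by rewrite !inE vA (negbTE Nbuv) eq_sym (negbTE Nuv) !andbF.
have S_fuel : #|survivors A| <= fuel.
  by rewrite -ltnS (leq_trans (proper_card (survivors_proper A0))).
by have [s sG bsv] := IH _ S_fuel vS; exists s; rewrite ?setU1r.
Qed.

Lemma card_beaten (A : {set T}) w : #|beaten A w| = \sum_(v in A) ((v != w) && b w v).
Proof.
rewrite -sum1dep_card big_mkcondr /=.
by apply: eq_bigr => v _; case: (_ && _).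
Qed.

Hypothesis b_total : forall u v, u != v -> b u v || b v u.

Lemma sum_card_beaten (A : {set T}) :
  #|A| * (#|A|).-1 <= (\sum_(w in A) #|beaten A w|).*2.
Proof.
rewrite -addnn.
under [X in X + _]eq_bigr do rewrite card_beaten.
rewrite exchange_big /=.
under [X in _ + X]eq_bigr do rewrite card_beaten.
rewrite -big_split /= -sum_nat_const; apply: leq_sum => w wA.
rewrite -big_split /= -(sum_neq_card _ _ _ wA); apply: leq_sum => v _.
have [// | Nvw] := eqVneq v w.
by move/b_total: Nvw; case: (b v w); case: (b w v).
Qed.

Lemma champion_beats_half (A : {set T}) :
  A != set0 -> (#|A|).-1 <= (#|beaten A (champion A)|).*2.
Proof.
move=> A0; have A_gt0 : 0 < #|A| by rewrite card_gt0.
rewrite -(leq_pmul2l A_gt0) (leq_trans (sum_card_beaten A)) // -doubleMr leq_double.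
by rewrite -sum_nat_const leq_sum // => w; apply: champion_max.
Qed.

Lemma card_survivors (A : {set T}) :
  A != set0 -> (#|survivors A|).*2.+1 <= #|A|.
Proof.
move=> A0; have := champion_beats_half A0; set u := champion A.
have uA : u \in A := champion_in A0.
have u_beaten : u \notin beaten A u by rewrite inE eqxx andbF.
have sub : u |: beaten A u \subset A.
  by apply/subsetP => v; rewrite !inE => /orP[/eqP-> // | /andP[]].
have := cardsID (u |: beaten A u) A; rewrite (setIidPr sub) cardsU1 u_beaten.
rewrite -/(survivors A); lia.
Qed.

Lemma card_greedy_lt fuel (A : {set T}) k : #|A| < 2 ^ k -> #|greedy fuel A| <= k.
Proof.
elim: fuel A k => [|fuel IH] A k A_lt /=; first by rewrite cards0.
have [_ | A0] := eqVneq A set0; first by rewrite cards0.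
case: k A_lt => [|k]; first by rewrite expn0 ltnS leqn0 cards_eq0 (negbTE A0).
rewrite expnS => A_lt; rewrite cardsU1 -add1n leq_add ?leq_b1 // IH //.
by have := card_survivors A0; lia.
Qed.

Lemma card_greedy_up_log fuel (A : {set T}) :
  1 < #|A| -> #|greedy fuel A| <= up_log 2 #|A|.
Proof.
move=> A_gt1; have A0 : A != set0 by rewrite -card_gt0 ltnW.
have := up_logP #|A| (isT : 1 < 2); have := up_log_gt0 2 #|A|; rewrite A_gt1.
case: (up_log 2 #|A|) => [|e] // _; rewrite expnS => A_le.
case: fuel => [|fuel] /=; first by rewrite cards0.
rewrite (negbTE A0) cardsU1 -add1n leq_add ?leq_b1 // card_greedy_lt //.
by have := card_survivors A0; lia.
Qed.
End Tournament.

(* [b u v] records that the comparator answered "x_u >= x_v". *)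
Definition add_edge {n} (b : rel 'I_n) (u v : 'I_n) : rel 'I_n :=
  fun i j => b i j || (i == u) && (j == v).

Fixpoint query_all {n} (leaf : rel 'I_n -> {set 'I_n})
    (ps : seq ('I_n * 'I_n)) (b : rel 'I_n) : ctree n :=
  if ps is (u, v) :: ps' then
    Cmp u v (query_all leaf ps' (add_edge b u v))
            (query_all leaf ps' (add_edge b v u))
  else Out (leaf b).

Lemma subrel_add_edge n (b : rel 'I_n) u v : subrel b (add_edge b u v).
Proof. by move=> i j bij; rewrite /add_edge bij. Qed.

Lemma add_edge_uv n (b : rel 'I_n) u v : add_edge b u v u v.
Proof. by rewrite /add_edge !eqxx orbT. Qed.

Section Runs.
Local Set Implicit Arguments.
Local Unset Strict Implicit.
Local Open Scope ring_scope.
Variables (R : realType) (n : nat) (x : 'I_n -> R).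

Definition consistent (b : rel 'I_n) := forall u v, b u v -> x v <= x u + 1.

Lemma consistent_add_edge b u v :
  consistent b -> x v <= x u + 1 -> consistent (add_edge b u v).
Proof. by move=> xb xuv i j /orP[/xb // | /andP[/eqP-> /eqP->]]. Qed.

Lemma run_OutE S0 k S : run x (Out S0) k S -> k = 0%N /\ S = S0.
Proof. by move=> r; inversion r. Qed.

Lemma run_CmpE i j t1 t2 k S : run x (Cmp i j t1 t2) k S ->
  exists2 k', k = k'.+1 &
    (x j <= x i + 1 /\ run x t1 k' S) \/ (x i <= x j + 1 /\ run x t2 k' S).
Proof. by move=> r; inversion r; exists k0 => //; [left | right]. Qed.

Lemma run_query_all leaf ps b k S :
  run x (query_all leaf ps b) k S -> consistent b ->
  k = size ps /\ exists b', [/\ consistent b', subrel b b',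
    {in ps, forall p, b' p.1 p.2 || b' p.2 p.1} & S = leaf b'].
Proof.
elim: ps b k => [|[u v] ps IH] b k /=.
  by move=> /run_OutE[-> ->] xb; split => //; exists b; split.
case/run_CmpE=> k' -> r xb.
have [c [r' xc bc c_uv]] : exists c, [/\ run x (query_all leaf ps c) k' S,
    consistent c, subrel b c & c u v || c v u].
  case: r => [[xuv r] | [xvu r]];
    [exists (add_edge b u v) | exists (add_edge b v u)];
    by split; rewrite ?add_edge_uv ?orbT //;
      [exact: consistent_add_edge | exact: subrel_add_edge].
have [-> [b' [xb' cb' dec ->]]] := IH _ _ r' xc.
split => //; exists b'; split => // [i j /bc /cb' // | p].
by rewrite inE => /orP[/eqP-> | /dec //]; case/orP: c_uv => /cb' ->; rewrite ?orbT.
Qed.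
End Runs.

Definition ltn_pairs n : seq ('I_n * 'I_n) :=
  [seq (tnth t ord0, tnth t ord_max)
  | t <- enum [set t : 2.-tuple 'I_n | sorted ltn (map val t)]].

Lemma size_ltn_pairs n : size (ltn_pairs n) = 'C(n, 2).
Proof. by rewrite size_map -cardE card_ltn_sorted_tuples. Qed.

Lemma ltn_pairs_total n (b : rel 'I_n) :
  {in ltn_pairs n, forall p, b p.1 p.2 || b p.2 p.1} ->
  forall u v, u != v -> b u v || b v u.
Proof.
move=> dec u v Nuv; wlog uv : u v Nuv / u < v.
  move=> W; case: (ltngtP u v) => [/W -> // | vu | /val_inj Euv].
    by rewrite orbC W // eq_sym.
  by rewrite Euv eqxx in Nuv.
apply: (dec (u, v)); apply/mapP; exists [tuple u; v] => //.
by rewrite mem_enum inE /= andbT.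
Qed.

Theorem mainTheorem4 (n : nat) (hn : (2 <= n)%N) :
  exists t : ctree n,
    forall (R : realType) (x : 'I_n -> R) (k : nat) (S : {set 'I_n}),
      run x t k S ->
      [/\ (k <= 'C(n, 2))%N, (#|S| <= up_log 2 n)%N & kmaxset x 1 S].
Proof.
case: n hn => [|[|n]] // _.
exists (query_all (fun b => greedy b ord0 n.+2 setT) (ltn_pairs n.+2) (fun _ _ => false)).
move=> R x k S /run_query_all[// | -> [b [xb _ /ltn_pairs_total b_total ->]]].
split.
- by rewrite size_ltn_pairs.
- have := card_greedy_up_log ord0 b_total n.+2 (A := setT).
  by rewrite cardsT card_ord; apply.
- pose m := [arg max_(i > ord0) x i]%O.
  have xm : forall i, (x i <= x m)%R by rewrite /m; case: arg_maxP => //= j _ + i; apply.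
  have [|s sS dom] := @greedy_dominates _ b ord0 n.+2 setT m _ (in_setT m).
    by rewrite cardsT card_ord.
  have xms : (x m <= x s + 1)%R by case/orP: dom => [/eqP-> | /xb]; lra.
  by exists s => // i; have := xm i; lra.
Qed.
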